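(* Let $n\ge 1$, let $m_1,\dots,m_n$ and $x_1,\dots,x_n$ be real coordinates on the phase space with $x_1,\dots,x_n$ pairwise distinct, and equip functions of $(x,m)$ with the Poisson bracket determined by $$\{x_i,x_k\}=\operatorname{sgn}(x_i-x_k),\qquad \{m_i,m_k\}=\{m_i,x_k\}=0 .$$ Let $$h=\sum_{i,k=1}^n m_i m_k e^{-|x_i-x_k|}.$$ Then the Hamiltonian equations $\dot x_j=\{x_j,h\}$, $\dot m_j=\{m_j,h\}$ are exactly the system $$\dot m_j=0,\qquad \dot x_j=2\sum_{\substack{1\le k\le n\\ k\neq j}} m_j m_k e^{-|x_j-x_k|}+\sum_{k\neq j,\ i\neq j} m_i m_k\bigl(1-\operatorname{sgn}(x_j-x_k)\operatorname{sgn}(x_j-x_i)\bigr)e^{-|x_j-x_k|-|x_j-x_i|},\qquad 1\le j\le n,$$ (the second sum running over all pairs $(i,k)$ with $i\neq j$, $k\neq j$), i.e. the equations of motion of $n$ conservative peakons of the modified Camassa–Holm equation. Moreover, with $u(x)=\sum_{j=1}^n m_j e^{-|x-x_j|}$ and $m=u-u_{xx}=2\sum_{j=1}^n m_j\delta_{x_j}$, one has $h=\tfrac12\int u\,m\,d\xi=\tfrac12\|u\|_{H^1}^2$.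
   Context: The system arises from the modified Camassa–Holm equation $m_t+((u^2-u_x^2)m)_x=0$, $m=u-u_{xx}$, with the peakon Ansatz $u=\sum_j m_j(t)e^{-|x-x_j(t)|}$ and the rule that $u_x^2 m$ is defined by multiplying the Dirac mass at each $x_j$ by the arithmetic average of the left and right limits of $u_x^2$ at $x_j$; this gives $\dot m_j=0$, $\dot x_j=u(x_j)^2-\langle u_x^2\rangle(x_j)$, which is the displayed system. Here $\|u\|_{H^1}^2=\int(u^2+u_x^2)\,dx$. *)

From HB Require Import structures.
From mathcomp Require Import all_boot all_order all_algebra.
From mathcomp Require Import all_classical all_reals all_analysis.
Set Implicit Arguments. Unset Strict Implicit. Unset Printing Implicit Defensive.
Import Order.TTheory GRing.Theory Num.Theory.
Import numFieldNormedType.Exports.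
Local Open Scope ring_scope.

Section PeakonDefs.
Variables (R : realType) (n : nat).

Definition phase_fun := ('I_n -> R) -> ('I_n -> R) -> R.

Definition upd (v : 'I_n -> R) (k : 'I_n) (t : R) : 'I_n -> R :=
  fun i => if i == k then t else v i.

Definition dx (F : phase_fun) (k : 'I_n) (x m : 'I_n -> R) : R :=
  derive1 (fun t => F (upd x k t) m) (x k).
Definition dm (F : phase_fun) (k : 'I_n) (x m : 'I_n -> R) : R :=
  derive1 (fun t => F x (upd m k t)) (m k).

Definition Pxx (x : 'I_n -> R) (i k : 'I_n) : R := Num.sg (x i - x k).
Definition Pxm (x : 'I_n -> R) (i k : 'I_n) : R := 0.
Definition Pmx (x : 'I_n -> R) (i k : 'I_n) : R := 0.
Definition Pmm (x : 'I_n -> R) (i k : 'I_n) : R := 0.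

Definition pbracket (F G : phase_fun) (x m : 'I_n -> R) : R :=
  \sum_(i < n) \sum_(k < n)
    (  Pxx x i k * dx F i x m * dx G k x m
     + Pxm x i k * dx F i x m * dm G k x m
     + Pmx x i k * dm F i x m * dx G k x m
     + Pmm x i k * dm F i x m * dm G k x m).

Definition xcoord (j : 'I_n) : phase_fun := fun x m => x j.
Definition mcoord (j : 'I_n) : phase_fun := fun x m => m j.

Definition ham : phase_fun := fun x m =>
  \sum_(i < n) \sum_(k < n) m i * m k * expR (- `|x i - x k|).

Definition xdot_rhs (x m : 'I_n -> R) (j : 'I_n) : R :=
  2 * (\sum_(k < n | k != j) m j * m k * expR (- `|x j - x k|))
  + \sum_(i < n | i != j) \sum_(k < n | k != j)
      m i * m k * (1 - Num.sg (x j - x k) * Num.sg (x j - x i))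
        * expR (- `|x j - x k| - `|x j - x i|).

Definition peakon_u (x m : 'I_n -> R) (xi : R) : R :=
  \sum_(j < n) m j * expR (- `|xi - x j|).

(* pairing  int u * mu  for the measure  mu = 2 sum_j m_j delta_{x_j} *)
Definition pair_delta (x m : 'I_n -> R) (f : R -> R) : R :=
  \sum_(j < n) 2 * m j * f (x j).

End PeakonDefs.

From HB Require Import structures.
From mathcomp Require Import all_boot all_order all_algebra.
From mathcomp Require Import all_classical all_reals all_analysis.
From mathcomp Require Import measurable_realfun ring lra.
Import Order.TTheory GRing.Theory Num.Theory.
Import numFieldNormedType.Exports.

(* Only the x's are coupled by the bracket, so {m_j, h} = 0 and
   {x_j, h} = sum_k sgn(x_j - x_k) dh/dx_k, where
   dh/dx_k = -2 sum_l m_k m_l sgn(x_k - x_l) e^(-|x_k - x_l|).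
   Symmetrising this double sum in (k, l), the terms with k, l <> j collapse
   by a three-point identity for the signs, which yields the peakon system.
   The identity u - u'' = 2 sum_j m_j delta_(x_j) is checked against a test
   function phi on each side of a peak a, where (phi - phi') e^(t - a) and
   -(phi + phi') e^(a - t) are primitives of e^(-|t - a|) (phi - phi'').
   Off the peaks, u^2 + u'^2 = sum_(i,k) m_i m_k K(x_i, x_k, t) with
   K(a, b, t) = (1 + sgn(t - a) sgn(t - b)) e^(-|t - a| - |t - b|); the kernel
   vanishes between a and b and each outer half-line contributes e^(-|a - b|),
   so the H^1 norm of u is 2 h. *)

Local Open Scope classical_set_scope.
Local Open Scope ring_scope.

Section SignOfDifference.
Context {R : realDomainType}.

Lemma sgr_sub_gt {a b : R} : b < a -> Num.sg (a - b) = 1.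
Proof. by move=> ba; rewrite gtr0_sg // subr_gt0. Qed.

Lemma sgr_sub_lt {a b : R} : a < b -> Num.sg (a - b) = -1.
Proof. by move=> ab; rewrite ltr0_sg // subr_lt0. Qed.

Lemma normr_sub_gt {a b : R} : b < a -> `|a - b| = a - b.
Proof. by move=> ba; rewrite gtr0_norm // subr_gt0. Qed.

Lemma normr_sub_lt {a b : R} : a < b -> `|a - b| = b - a.
Proof. by move=> ab; rewrite ltr0_norm ?opprB // subr_lt0. Qed.

Lemma ler_sgr (s t : R) : s <= t -> Num.sg s <= Num.sg t.
Proof. by move=> st; case: sgrP => hs; case: sgrP => ht //; lra. Qed.

Lemma neq_lt_cases {a b : R} : a != b -> a < b \/ b < a.
Proof. by rewrite neq_lt => /orP[]; [left|right]. Qed.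

End SignOfDifference.

Ltac rewrite_sub_signs h :=
  rewrite ?(sgr_sub_gt h) ?(sgr_sub_lt h) ?(normr_sub_gt h) ?(normr_sub_lt h).

(* Both sides vanish unless [a] lies between [b] and [c], and then
   [|b - c| = |a - b| + |a - c|]. *)
Lemma sgr_expR_three_points {R : realType} {a b c : R} :
  a != b -> a != c -> b != c ->
  - (Num.sg (a - b) * Num.sg (b - c) + Num.sg (a - c) * Num.sg (c - b))
    * expR (- `|b - c|)
  = (1 - Num.sg (a - c) * Num.sg (a - b)) * expR (- `|a - c| - `|a - b|).
Proof.
move=> /neq_lt_cases[] hab /neq_lt_cases[] hac /neq_lt_cases[] hbc.
all: rewrite_sub_signs hab; rewrite_sub_signs hac; rewrite_sub_signs hbc.
all: try by exfalso; lra.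
all: try by ring.
- by rewrite (_ : - (a - c) - (b - a) = - (b - c)); ring.
- by rewrite (_ : - (c - a) - (a - b) = - (c - b)); ring.
Qed.

Lemma double_sum_sym_eq {R : numDomainType} {n : nat} (A B : 'I_n -> 'I_n -> R) :
  (forall k l, A k l + A l k = B k l + B l k) ->
  \sum_(k < n) \sum_(l < n) A k l = \sum_(k < n) \sum_(l < n) B k l.
Proof.
move=> AB.
have sum_sym (C : 'I_n -> 'I_n -> R) :
    \sum_(k < n) \sum_(l < n) (C k l + C l k)
    = 2 * \sum_(k < n) \sum_(l < n) C k l.
  under eq_bigr do rewrite big_split /=.
  by rewrite big_split /= [X in _ + X]exchange_big /= mulr2n mulrDl mul1r.
apply: (mulfI (_ : 2 != 0 :> R)); first by rewrite pnatr_eq0.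
rewrite -!sum_sym; apply: eq_bigr => k _; apply: eq_bigr => l _; exact: AB.
Qed.

Lemma sum_delta_mull {R : pzSemiRingType} {n : nat} (F : 'I_n -> R) (k : 'I_n) :
  \sum_(i < n) (i == k)%:R * F i = F k.
Proof.
by rewrite (bigD1 k) //= eqxx mul1r big1 ?addr0 // => i /negbTE ->; rewrite mul0r.
Qed.

Section RealDerivatives.
Context {R : realType}.

Lemma derive1_val {f : R -> R} {t df : R} : is_derive t 1 f df -> derive1 f t = df.
Proof. by move=> fdf; rewrite derive1E derive_val. Qed.

Lemma is_derive_continuous {f df : R -> R} :
  (forall t : R, is_derive t 1 f (df t)) -> continuous f.
Proof.
move=> fdf t; apply: differentiable_continuous; apply/derivable1_diffP.
exact: ex_derive.
Qed.

Lemma is_derive_sumr n (h : 'I_n -> R -> R) (t : R) (dh : 'I_n -> R) :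
  (forall i, is_derive t 1 (h i) (dh i)) ->
  is_derive t 1 (fun s => \sum_(i < n) h i s) (\sum_(i < n) dh i).
Proof. by move=> hdh; rewrite -fct_sumE; exact: is_derive_sum. Qed.

Lemma derivable_sumr n (h : 'I_n -> R -> R) (t : R) :
  (forall i, derivable (h i) t 1) -> derivable (fun s => \sum_(i < n) h i s) t 1.
Proof. by move=> dh; rewrite -fct_sumE; exact: derivable_sum. Qed.

Lemma derivableM_fun (f g : R -> R) (t : R) :
  derivable f t 1 -> derivable g t 1 -> derivable (fun s => f s * g s) t 1.
Proof. exact: derivableM. Qed.

Lemma is_derive_expR_affine (c k t : R) :
  is_derive t 1 (fun s => expR (c + k * s)) (k * expR (c + k * t)).
Proof.
have daff : is_derive t 1 (fun s => c + k * s) (0 + k * 1) :=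
  is_deriveD (is_derive_cst c t 1) (is_deriveZ k (is_derive_id t 1)).
have := is_derive1_comp (is_derive_expR _) daff.
by rewrite /comp add0r mulr1 mulrC.
Qed.

Lemma is_derive_expR_normN {g : R -> R} {t dg : R} :
  is_derive t 1 g dg -> g t != 0 ->
  is_derive t 1 (fun s => expR (- `|g s|))
    (- Num.sg (g t) * dg * expR (- `|g t|)).
Proof.
move=> gdg gt_neq0.
have cg : g @ t --> g t.
  by apply: differentiable_continuous; apply/derivable1_diffP; exact: ex_derive.
have near_sg : \forall s \near t,
    expR (- (Num.sg (g t) * g s)) = expR (- `|g s|).
  case: (ltrgt0P (g t)) => [gp|gn|g0]; last by rewrite g0 eqxx in gt_neq0.
  - near=> s; have gs : 0 < g s by near: s; exact: cvgr_gt cg _ gp.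
    by rewrite gtr0_sg // mul1r gtr0_norm.
  - near=> s; have gs : g s < 0 by near: s; exact: cvgr_lt cg _ gn.
    by rewrite ltr0_sg // mulN1r ltr0_norm.
apply: near_eq_is_derive near_sg _.
have dlin : is_derive t 1 (fun s => - (Num.sg (g t) * g s))
    (- (Num.sg (g t) * dg)) := is_deriveN (is_deriveZ (Num.sg (g t)) gdg).
have := is_derive1_comp (is_derive_expR _) dlin.
rewrite /comp -normrEsg.
by rewrite (_ : - Num.sg (g t) * dg * _ = expR (- `|g t|) * - (Num.sg (g t) * dg)) //; ring.
Unshelve. all: by end_near.
Qed.

Lemma continuous_expR_dist (a : R) : continuous (fun t : R => expR (- `|t - a|)).
Proof.
move=> t; apply: continuous_comp; last exact: continuous_expR.
apply: (@continuous_comp _ _ _ (fun t : R => `|t - a|) -%R); last exact: continuousN.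
apply: (@continuous_comp _ _ _ (fun t : R => t - a) Num.norm); last exact: norm_continuous.
by apply: continuousB => //; exact: cvg_cst.
Qed.

End RealDerivatives.

Section Update.
Context {R : realType} {n : nat}.
Implicit Type v : 'I_n -> R.

Lemma upd_id v (k : 'I_n) : upd v k (v k) = v.
Proof. by apply/funext => i; rewrite /upd; case: eqP => // ->. Qed.

Lemma is_derive_upd v (k i : 'I_n) (t : R) :
  is_derive t 1 (fun s => upd v k s i) (i == k)%:R.
Proof. by rewrite /upd; case: (i == k); [exact: is_derive_id | exact: is_derive_cst]. Qed.

End Update.

Section PeakonBrackets.
Context {R : realType} {n : nat}.
Variables x m : 'I_n -> R.
Hypothesis x_inj : injective x.

Let E (i l : 'I_n) := expR (- `|x i - x l|).
Let force (i l : 'I_n) := m i * m l * Num.sg (x i - x l) * E i l.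

Lemma derivable_ham_m (k : 'I_n) : derivable (fun t => ham x (upd m k t)) (m k) 1.
Proof.
apply: derivable_sumr => i; apply: derivable_sumr => l.
have dupd p : derivable (fun t => upd m k t p) (m k) 1.
  by apply: ex_derive; exact: is_derive_upd.
by apply: derivableM_fun; [exact: derivableM_fun | exact: derivable_cst].
Qed.

Lemma is_derive_ham_x (k : 'I_n) :
  is_derive (x k) 1 (fun t => ham (upd x k t) m)
    (\sum_(i < n) \sum_(l < n) - force i l * ((i == k)%:R - (l == k)%:R)).
Proof.
apply: is_derive_sumr => i; apply: is_derive_sumr => l.
have [<-|il] := eqVneq i l.
  rewrite /force subrr sgr0 !(mulr0, mul0r, oppr0).
  under eq_fun do rewrite subrr.
  exact: is_derive_cst.
have dxx : is_derive (x k) 1 (fun t => upd x k t i - upd x k t l)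
    ((i == k)%:R - (l == k)%:R) :=
  is_deriveB (is_derive_upd _ _ _ _) (is_derive_upd _ _ _ _).
have xil : upd x k (x k) i - upd x k (x k) l != 0.
  by rewrite !upd_id subr_eq0 (inj_eq x_inj).
have := is_deriveZ (m i * m l) (is_derive_expR_normN dxx xil).
rewrite !upd_id => dexp.
rewrite (_ : - force i l * _ = m i * m l * (- Num.sg (x i - x l)
    * ((i == k)%:R - (l == k)%:R) * expR (- `|x i - x l|))); first exact: dexp.
by rewrite /force /E; ring.
Qed.

Lemma dx_ham (k : 'I_n) : dx (@ham R n) k x m = - 2 * \sum_(l < n) force k l.
Proof.
rewrite /dx (derive1_val (is_derive_ham_x k)).
rewrite (eq_bigr (fun i => (i == k)%:R * \sum_l - force i l
                           - \sum_l (l == k)%:R * - force i l)); last first.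
  by move=> i _; rewrite mulr_sumr -sumrB; apply: eq_bigr => l _; ring.
rewrite sumrB sum_delta_mull.
under [X in _ - X]eq_bigr do rewrite sum_delta_mull.
have forceN i : force i k = - force k i.
  by rewrite /force /E distrC -opprB sgrN; ring.
under [X in _ - X]eq_bigr do rewrite forceN.
by rewrite !sumrN; ring.
Qed.

Lemma dx_xcoord (j i : 'I_n) : dx (xcoord j) i x m = (j == i)%:R.
Proof. exact: derive1_val (is_derive_upd _ _ _ _). Qed.

Lemma dx_mcoord (j i : 'I_n) : dx (mcoord j) i x m = 0.
Proof. exact: derive1_val (is_derive_cst _ _ _). Qed.

Lemma pbracket_mcoord (j : 'I_n) : pbracket (mcoord j) (@ham R n) x m = 0.
Proof.
rewrite /pbracket big1 // => i _; rewrite big1 // => k _.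
by rewrite /Pxm /Pmx /Pmm dx_mcoord; ring.
Qed.

Lemma pbracket_xcoordE (j : 'I_n) :
  pbracket (xcoord j) (@ham R n) x m
  = \sum_(k < n) Num.sg (x j - x k) * dx (@ham R n) k x m.
Proof.
rewrite /pbracket.
rewrite -(sum_delta_mull (fun i => \sum_k Num.sg (x i - x k) * dx (@ham R n) k x m) j).
apply: eq_bigr => i _; rewrite mulr_sumr; apply: eq_bigr => k _.
by rewrite dx_xcoord eq_sym /Pxx /Pxm /Pmx /Pmm; ring.
Qed.

Let xdot_summand (j k l : 'I_n) :=
  (k == j)%:R * (l != j)%:R * (2 * (m k * m l * E k l))
  + (k != j)%:R * (l != j)%:R
    * (m k * m l * (1 - Num.sg (x j - x l) * Num.sg (x j - x k))
       * expR (- `|x j - x l| - `|x j - x k|)).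

Lemma sum_xdot_summand (j : 'I_n) :
  \sum_(k < n) \sum_(l < n) xdot_summand j k l = xdot_rhs x m j.
Proof.
rewrite /xdot_rhs; under eq_bigr do rewrite big_split.
rewrite big_split /=; congr (_ + _).
  rewrite (eq_bigr (fun k => (k == j)%:R * \sum_l (l != j)%:R * (2 * (m k * m l * E k l))));
    last by move=> k _; rewrite mulr_sumr; apply: eq_bigr => l _; ring.
  rewrite sum_delta_mull mulr_sumr [RHS]big_mkcond; apply: eq_bigr => l _.
  by case: (l != j) => /=; rewrite ?mulr1n ?mulr0n /E; ring.
rewrite [RHS]big_mkcond; apply: eq_bigr => k _; case: (k != j) => /=.
  rewrite [RHS]big_mkcond; apply: eq_bigr => l _.
  by case: (l != j) => /=; rewrite ?mulr1n ?mulr0n; ring.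
by rewrite big1 // => l _; rewrite mulr0n; ring.
Qed.

Lemma xdot_summand_sym (j k l : 'I_n) :
  - 2 * (Num.sg (x j - x k) * force k l + Num.sg (x j - x l) * force l k)
  = xdot_summand j k l + xdot_summand j l k.
Proof.
have xne (a b : 'I_n) : a != b -> x a != x b by rewrite (inj_eq x_inj).
rewrite /xdot_summand /force /E.
have [->|kj] := eqVneq k j; have [->|lj] := eqVneq l j.
- by rewrite ?eqxx /= !subrr sgr0 ?mulr1n ?mulr0n; ring.
- rewrite ?eqxx ?(negbTE lj) ?lj /= subrr sgr0 ?mulr1n ?mulr0n.
  by have [h|h] := neq_lt_cases (xne _ _ lj); rewrite_sub_signs h; ring.
- rewrite ?eqxx ?(negbTE kj) ?kj /= subrr sgr0 ?mulr1n ?mulr0n.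
  by have [h|h] := neq_lt_cases (xne _ _ kj); rewrite_sub_signs h; ring.
rewrite ?(negbTE kj) ?(negbTE lj) ?kj ?lj /= ?mulr1n ?mulr0n.
have [<-|kl] := eqVneq k l.
  rewrite subrr sgr0.
  by have [h|h] := neq_lt_cases (xne _ _ kj); rewrite_sub_signs h; ring.
have jk : j != k by rewrite eq_sym.
have jl : j != l by rewrite eq_sym.
have := sgr_expR_three_points (xne _ _ jk) (xne _ _ jl) (xne _ _ kl).
rewrite (distrC (x l) (x k)) (addrC (- `|x j - x k|)) => three.
transitivity (2 * m k * m l * (- (Num.sg (x j - x k) * Num.sg (x k - x l)
    + Num.sg (x j - x l) * Num.sg (x l - x k)) * expR (- `|x k - x l|))).
  by ring.
by rewrite three; ring.
Qed.

Lemma pbracket_xcoord (j : 'I_n) :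
  pbracket (xcoord j) (@ham R n) x m = xdot_rhs x m j.
Proof.
rewrite pbracket_xcoordE -sum_xdot_summand.
under eq_bigr do rewrite dx_ham mulrA mulr_sumr.
apply: double_sum_sym_eq => k l.
by rewrite -xdot_summand_sym; ring.
Qed.

End PeakonBrackets.

Section ExponentialIntegrals.
Context {R : realType}.
Notation mu := (@lebesgue_measure R).

Lemma measurable_EFin_continuous (f : R -> R) (D : set R) :
  continuous f -> measurable D -> measurable_fun D (EFin \o f).
Proof.
move=> cf mD; apply/measurable_EFinP.
exact: measurable_funS (continuous_measurable_fun cf).
Qed.

Lemma continuous_scaled_expR_affine (r c k : R) :
  continuous (fun t : R => r * expR (c + k * t)).
Proof.
move=> t; apply: cvgM; first exact: cvg_cst.
exact: is_derive_continuous (is_derive_expR_affine c k) t.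
Qed.

Lemma integral_expR_tail (c a : R) :
  (\int[mu]_(t in `[a, +oo[) (2 * expR (c - 2 * t))%:E = (expR (c - 2 * a))%:E)%E.
Proof.
have dF (t : R) : is_derive t 1 (fun s => - expR (c - 2 * s)) (2 * expR (c - 2 * t)).
  have dexp : is_derive t 1 (fun s => - expR (c + -2 * s)) (- (-2 * expR (c + -2 * t))) :=
    is_deriveN (is_derive_expR_affine c (-2) t).
  have affE (s : R) : c + -2 * s = c - 2 * s by rewrite mulNr.
  by move: dexp; under eq_fun do rewrite affE; rewrite affE mulNr opprK.
have cf : continuous (fun t : R => 2 * expR (c - 2 * t)).
  have -> : (fun t : R => 2 * expR (c - 2 * t)) = (fun t => 2 * expR (c + -2 * t)).
    by apply/funext => t; rewrite mulNr.
  exact: continuous_scaled_expR_affine.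
have cvg0 : (fun t => - expR (c - 2 * t)) t @[t --> +oo] --> (0 : R).
  have -> : (fun t => - expR (c - 2 * t))
            = (fun t => - (expR c * (expR (- t) * expR (- t)))).
    by apply/funext => t; rewrite -!expRD; congr (- expR _); ring.
  rewrite -oppr0 -(mulr0 (expR c)) -(mulr0 0); apply: cvgN.
  apply: cvgM; first exact: cvg_cst.
  by apply: cvgM; exact: cvgr_expR.
rewrite (@ge0_continuous_FTC2y R _ (fun s => - expR (c - 2 * s)) a 0).
- by rewrite sub0e EFinN oppeK.
- by move=> t _; rewrite mulr_ge0 // expR_ge0.
- exact: continuous_subspaceT.
- exact: cvg0.
- by move=> t _; exact: ex_derive.
- exact/cvg_at_right_filter/(is_derive_continuous dF a).
- by move=> t _; rewrite (derive1_val (dF t)).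
Qed.

Lemma measurable_sgr_sub (a : R) : measurable_fun setT (fun t : R => Num.sg (t - a)).
Proof.
apply: nondecreasing_measurable => // s t st.
by apply: ler_sgr; rewrite lerD2r.
Qed.

End ExponentialIntegrals.

Definition energy_kernel {R : realType} (a b t : R) : R :=
  (1 + Num.sg (t - a) * Num.sg (t - b)) * (expR (- `|t - a|) * expR (- `|t - b|)).

Section EnergyKernel.
Context {R : realType}.
Notation mu := (@lebesgue_measure R).
Implicit Types a b : R.

Lemma energy_kernel_ge0 a b t : 0 <= energy_kernel a b t.
Proof.
rewrite /energy_kernel mulr_ge0 ?mulr_ge0 ?expR_ge0 // -sgrM.
by case: sgrP => _; lra.
Qed.

Lemma energy_kernelC a b : energy_kernel a b = energy_kernel b a.
Proof.
by apply/funext => t; rewrite /energy_kernel [_ * Num.sg (t - b)]mulrC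
  [expR _ * expR (- `|t - b|)]mulrC.
Qed.

Lemma measurable_energy_kernel a b (D : set R) :
  measurable D -> measurable_fun D (EFin \o energy_kernel a b).
Proof.
move=> mD; apply/measurable_EFinP; apply: (measurable_funS measurableT) => //.
apply: measurable_funM.
  by apply: measurable_funD => //; apply: measurable_funM; exact: measurable_sgr_sub.
by apply: continuous_measurable_fun => t; apply: cvgM; exact: continuous_expR_dist.
Qed.

Lemma integral_energy_kernel_mid a b : a <= b ->
  (\int[mu]_(t in `[a, b]) (energy_kernel a b t)%:E = 0)%E.
Proof.
move=> ab; rewrite integral_itv_bndoo; last exact: measurable_energy_kernel.
rewrite (eq_integral (fun _ => 0%E)) ?integral0 // => t.
rewrite inE /= in_itv /= => /andP[a_lt_t t_lt_b].
by rewrite /energy_kernel (sgr_sub_gt a_lt_t) (sgr_sub_lt t_lt_b) mulrN1 subrr mul0r.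
Qed.

Lemma integral_energy_kernel_right a b : a <= b ->
  (\int[mu]_(t in `]b, +oo[) (energy_kernel a b t)%:E = (expR (a - b))%:E)%E.
Proof.
move=> ab.
transitivity (\int[mu]_(t in `]b, +oo[) (2 * expR ((a + b) - 2 * t))%:E)%E.
  apply: eq_integral => t; rewrite inE /= in_itv /= andbT => b_lt_t.
  have a_lt_t : a < t by apply: le_lt_trans b_lt_t.
  rewrite /energy_kernel (sgr_sub_gt a_lt_t) (sgr_sub_gt b_lt_t) (normr_sub_gt a_lt_t).
  by rewrite (normr_sub_gt b_lt_t) -expRD; congr (_%:E); congr (_ * expR _); ring.
rewrite integral_itv_obnd_cbnd.
  by rewrite integral_expR_tail; congr (_%:E); congr expR; ring.
have -> : (fun t => (2 * expR ((a + b) - 2 * t))%:E)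
          = EFin \o (fun t => 2 * expR ((a + b) + -2 * t)).
  by apply/funext => t; rewrite /= mulNr.
exact: measurable_EFin_continuous (continuous_scaled_expR_affine _ _ _) _.
Qed.

Lemma integral_energy_kernel_left a b : a <= b ->
  (\int[mu]_(t in `]-oo, a[) (energy_kernel a b t)%:E = (expR (a - b))%:E)%E.
Proof.
move=> ab.
pose f t := 2 * expR ((- a - b) + 2 * t).
have cf : continuous f := continuous_scaled_expR_affine _ _ _.
transitivity (\int[mu]_(t in `]-oo, a[) (f t)%:E)%E.
  apply: eq_integral => t; rewrite inE /= in_itv /= => t_lt_a.
  have t_lt_b : t < b by apply: lt_le_trans ab.
  rewrite /energy_kernel /f (sgr_sub_lt t_lt_a) (sgr_sub_lt t_lt_b).
  rewrite (normr_sub_lt t_lt_a) (normr_sub_lt t_lt_b) -expRD.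
  by congr (_%:E); rewrite (_ : - (a - t) + - (b - t) = - a - b + 2 * t); ring.
rewrite integral_itv_bndo_bndc; last exact: measurable_EFin_continuous.
have := @ge0_integration_by_substitutionNy R f (- a) (continuous_subspaceT cf).
rewrite opprK => ->; last by move=> t _; rewrite /f mulr_ge0 // expR_ge0.
transitivity (\int[mu]_(t in `[(- a)%R, +oo[) (2 * expR ((- a - b) - 2 * t))%:E)%E.
  by apply: eq_integral => t _; rewrite /f; congr (_%:E); congr (_ * expR _); ring.
by rewrite integral_expR_tail; congr (_%:E); congr expR; ring.
Qed.

Lemma integral_energy_kernel a b :
  (\int[mu]_t (energy_kernel a b t)%:E = (2 * expR (- `|a - b|))%:E)%E.
Proof.
wlog ab : a b / a <= b.
  move=> wlog_ab; have [|ba] := leP a b; first exact: wlog_ab.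
  by rewrite energy_kernelC distrC wlog_ab // ltW.
have -> : [set: R] = `]-oo, a[ `|` (`[a, b] `|` `]b, +oo[).
  apply/seteqP; split => t // _ /=; rewrite !in_itv /= andbT.
  by case: (ltP t a) => ta; [left | right; case: (leP t b); [left | right]].
have ge0 (D : set R) t : D t -> (0 <= (energy_kernel a b t)%:E)%E.
  by rewrite lee_fin energy_kernel_ge0.
rewrite ge0_integral_setU //=; last 4 first.
- exact: measurableU.
- by apply: measurable_energy_kernel; do 2 apply: measurableU => //.
- exact: ge0.
- apply/disj_setPS => t [] /=; rewrite !in_itv /= andbT.
  by move=> ta [/andP[at' _]|bt]; lra.
rewrite ge0_integral_setU //=; last 3 first.
- by apply: measurable_energy_kernel; exact: measurableU.
- exact: ge0.
- by apply/disj_setPS => t [] /=; rewrite !in_itv /= andbT => /andP[_ tb] bt; lra.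
rewrite integral_energy_kernel_left // integral_energy_kernel_mid //.
rewrite integral_energy_kernel_right // add0e -EFinD ler0_norm ?subr_le0 //.
by rewrite opprK; congr (_%:E); ring.
Qed.

Lemma integrable_energy_kernel a b : mu.-integrable setT (EFin \o energy_kernel a b).
Proof.
apply/integrableP; split; first exact: measurable_energy_kernel.
under eq_integral => t _ do rewrite /= ger0_norm ?energy_kernel_ge0 //.
by rewrite integral_energy_kernel ltry.
Qed.

End EnergyKernel.

Section FinitelyManyPoints.
Context {R : realType}.
Notation mu := (@lebesgue_measure R).

Lemma setD_mem_nil (D : set R) : D `\` [set y | y \in [::]] = D.
Proof. by apply/seteqP; split => y /=; [case | move=> Dy; split]. Qed.

Lemma setD_mem_cons (D : set R) a s :
  D `\` [set y | y \in a :: s] = (D `\ a) `\` [set y | y \in s].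
Proof.
apply/seteqP; split => y /=.
- move=> [Dy yas]; split; first split => //.
    by move=> ya; apply: yas; rewrite ya mem_head.
  by move=> ys; apply: yas; rewrite in_cons ys orbT.
- by move=> [[Dy ya] ys]; split => //; rewrite in_cons => /orP[/eqP|].
Qed.

Lemma measurable_fun_setD_seq (s : seq R) (D : set R) (f : R -> \bar R) :
  measurable D -> measurable_fun (D `\` [set y | y \in s]) f -> measurable_fun D f.
Proof.
elim: s D => [|a s IH] D mD; first by rewrite setD_mem_nil.
rewrite setD_mem_cons => /IH-/(_ (measurableD mD (measurable_set1 a))) fDa.
apply: (measurable_funS (E := (D `\ a) `|` [set a])) => //.
- exact: measurableU (measurableD mD (measurable_set1 a)) (measurable_set1 a).
- by move=> y Dy; have [->|ya] := eqVneq y a; [right | left; split => //; exact/eqP].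
- apply/measurable_funU => //; first exact: measurableD.
  by split => //; exact: measurable_fun_set1.
Qed.

Lemma integral_setD_seq (s : seq R) (D : set R) (f : R -> \bar R) :
  measurable D -> measurable_fun D f ->
  (\int[mu]_(t in D `\` [set y | y \in s]) f t = \int[mu]_(t in D) f t)%E.
Proof.
elim: s D => [|a s IH] D mD mf; first by rewrite setD_mem_nil.
have mDa : measurable (D `\ a) by exact: measurableD.
rewrite setD_mem_cons IH //; last exact: measurable_funS mf.
by apply: integral_setD1 => //; exact: measurable_funS mf.
Qed.

End FinitelyManyPoints.

Definition peakon_du {R : realType} {n : nat} (x m : 'I_n -> R) (t : R) : R :=
  \sum_(j < n) m j * (- Num.sg (t - x j) * expR (- `|t - x j|)).

Section PeakonEnergy.
Context {R : realType}.
Notation mu := (@lebesgue_measure R).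
Variables (n : nat) (x m : 'I_n -> R).

Lemma is_derive_peakon_u (t : R) : (forall j, t != x j) ->
  is_derive t 1 (peakon_u x m) (peakon_du x m t).
Proof.
move=> t_x; apply: is_derive_sumr => j.
have dsub : is_derive t 1 (fun s : R => s - x j) (1 - 0) :=
  is_deriveB (is_derive_id t 1) (is_derive_cst (x j) t 1).
have tj : t - x j != 0 by rewrite subr_eq0.
by have := is_deriveZ (m j) (is_derive_expR_normN dsub tj); rewrite subr0 mulr1.
Qed.

Lemma peakon_energy_density (t : R) :
  peakon_u x m t ^+ 2 + peakon_du x m t ^+ 2
  = \sum_(i < n) \sum_(k < n) m i * m k * energy_kernel (x i) (x k) t.
Proof.
rewrite /peakon_u /peakon_du !expr2 !mulr_suml -big_split /=; apply: eq_bigr => i _.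
by rewrite !mulr_sumr -big_split /=; apply: eq_bigr => k _; rewrite /energy_kernel; ring.
Qed.

Lemma peakon_energyE :
  (fun t => (peakon_u x m t ^+ 2 + peakon_du x m t ^+ 2)%:E)
  = (fun t => \sum_(i < n) \sum_(k < n)
                (m i * m k)%:E * (energy_kernel (x i) (x k) t)%:E)%E.
Proof.
apply/funext => t; rewrite peakon_energy_density -sumEFin.
by apply: eq_bigr => i _; rewrite -sumEFin; apply: eq_bigr => k _; rewrite EFinM.
Qed.

Lemma integrable_peakon_energy :
  mu.-integrable setT (fun t => (peakon_u x m t ^+ 2 + peakon_du x m t ^+ 2)%:E).
Proof.
rewrite peakon_energyE; apply: integrable_sum => // i _.
apply: integrable_sum => // k _; apply: integrableZl => //.
exact: integrable_energy_kernel.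
Qed.

Lemma integral_peakon_energy :
  (\int[mu]_t (peakon_u x m t ^+ 2 + peakon_du x m t ^+ 2)%:E = (2 * ham x m)%:E)%E.
Proof.
have intZ i k : mu.-integrable setT
    (fun t => (m i * m k)%:E * (energy_kernel (x i) (x k) t)%:E)%E.
  by apply: integrableZl => //; exact: integrable_energy_kernel.
rewrite peakon_energyE integral_sum //; last by move=> i; apply: integrable_sum.
rewrite /ham mulr_sumr -sumEFin; apply: eq_bigr => i _.
rewrite integral_sum // mulr_sumr -sumEFin; apply: eq_bigr => k _.
rewrite integralZl //; last exact: integrable_energy_kernel.
by rewrite integral_energy_kernel -EFinM; congr (_%:E); ring.
Qed.

Lemma ham_half_H1_norm :
  ((ham x m)%:E = (2^-1)%:E * \int[mu]_t
     (peakon_u x m t ^+ 2 + derive1 (peakon_u x m) t ^+ 2)%:E)%E.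
Proof.
pose peaks := [set y | y \in map x (enum 'I_n)].
have off_peaks : {in setT `\` peaks,
    (fun t => (peakon_u x m t ^+ 2 + peakon_du x m t ^+ 2)%:E)
    =1 (fun t => (peakon_u x m t ^+ 2 + derive1 (peakon_u x m) t ^+ 2)%:E)}.
  move=> t; rewrite inE => -[_ t_peaks] /=.
  suff t_x j : t != x j by rewrite (derive1_val (is_derive_peakon_u t t_x)).
  by apply: contraPneq t_peaks => ->; rewrite /peaks /= map_f ?mem_enum.
have mE := measurable_int mu integrable_peakon_energy.
have mD : measurable_fun setT
    (fun t => (peakon_u x m t ^+ 2 + derive1 (peakon_u x m) t ^+ 2)%:E).
  apply: (measurable_fun_setD_seq (map x (enum 'I_n))) => //.
  exact: eq_measurable_fun off_peaks (measurable_funS measurableT _ mE).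
rewrite -(integral_setD_seq (map x (enum 'I_n)) setT _ measurableT mD).
rewrite (@eq_integral _ _ _ mu _
    (fun t => (peakon_u x m t ^+ 2 + peakon_du x m t ^+ 2)%:E));
  last by move=> t /off_peaks ->.
by rewrite integral_setD_seq // integral_peakon_energy -EFinM mulrA mulVf ?mul1r.
Qed.

End PeakonEnergy.

Section RealAnalysis.
Context {R : realType}.
Notation mu := (@lebesgue_measure R).

Lemma integral_itv_cc_primitive {f F dF : R -> R} {a b : R} : a < b -> continuous f ->
  (forall t : R, is_derive t 1 F (dF t)) -> {in `]a, b[, dF =1 f} ->
  (\int[mu]_(t in `[a, b]) (f t)%:E = (F b - F a)%:E)%E.
Proof.
move=> ab cf FdF dFf.
have cF := is_derive_continuous FdF.
rewrite EFinB; apply: continuous_FTC2 => //.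
- exact: continuous_subspaceT.
- split; first by move=> t _; exact: ex_derive.
  + exact/cvg_at_right_filter/cF.
  + exact/cvg_at_left_filter/cF.
- by move=> t /dFf <-; rewrite (derive1_val (FdF t)).
Qed.

Lemma derive1_eq0_far {f : R -> R} {A : R} :
  (forall t, A < `|t| -> f t = 0) -> forall t, A < `|t| -> derive1 f t = 0.
Proof.
move=> f0 t At.
have near0 : \forall s \near t, (cst 0 : R -> R) s = f s.
  have cnorm : (fun s : R => `|s|) @ t --> `|t| by exact: norm_continuous.
  by near=> s; rewrite f0 //; near: s; exact: cvgr_gt cnorm _ At.
by rewrite derive1E -(near_eq_derive (1 : R) near0) derive_cst.
Unshelve. all: by end_near.
Qed.

Lemma continuous_peakon_u n (x m : 'I_n -> R) : continuous (peakon_u x m).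
Proof.
move=> t; rewrite /peakon_u -fct_sumE.
apply: (big_ind (fun f : R -> R => {for t, continuous f})) => [|f g cf cg|j _].
- exact: cvg_cst.
- exact: cvgD.
- by apply: cvgM; [exact: cvg_cst | exact: continuous_expR_dist].
Qed.

End RealAnalysis.

Section TestFunction.
Context {R : realType}.
Notation mu := (@lebesgue_measure R).
Context {phi : R -> R}.
Hypothesis d1 : forall t : R, derivable phi t 1.
Hypothesis d2 : forall t : R, derivable (derive1 phi) t 1.
Hypothesis c2 : continuous (derive1n 2 phi).

Let phi' := derive1 phi.
Let phi'' := derive1 phi'.

Let is_derive_phi (t : R) : is_derive t 1 phi (phi' t).
Proof. by rewrite /phi' derive1E; exact: derivableP. Qed.

Let is_derive_phi' (t : R) : is_derive t 1 phi' (phi'' t).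
Proof. by rewrite /phi'' derive1E; exact: derivableP. Qed.

Lemma continuous_expR_dist_test (a : R) :
  continuous (fun t => expR (- `|t - a|) * (phi t - phi'' t)).
Proof.
move=> t; apply: cvgM; first exact: continuous_expR_dist.
by apply: cvgB; [exact: (is_derive_continuous is_derive_phi t) | exact: c2].
Qed.

Lemma integral_expR_dist_test {a c d : R} : c < a < d ->
  phi c = 0 -> phi' c = 0 -> phi d = 0 -> phi' d = 0 ->
  (\int[mu]_(t in `[c, d]) (expR (- `|t - a|) * (phi t - phi'' t))%:E
   = (2 * phi a)%:E)%E.
Proof.
move=> /andP[ca ad] phic phi'c phid phi'd.
set f := fun t => expR (- `|t - a|) * (phi t - phi'' t).
have cf : continuous f := continuous_expR_dist_test a.
have -> : `[c, d]%classic = `[c, a] `|` `]a, d].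
  apply/seteqP; split => t /=; rewrite !in_itv /=.
  - by move=> /andP[ct td]; case: (leP t a) => ta; [left|right]; apply/andP.
  - by move=> [/andP[ct ta]|/andP[at' td]]; apply/andP; split => //; lra.
rewrite integral_setU //; last 2 first.
- by apply: measurable_EFin_continuous => //; exact: measurableU.
- by apply/disj_setPS => t [] /=; rewrite !in_itv /= => /andP[_ ta] /andP[at' _]; lra.
rewrite integral_itv_obnd_cbnd; last exact: measurable_EFin_continuous.
pose G t := expR (- a + 1 * t) * (phi t - phi' t).
have dG (t : R) : is_derive t 1 G
    (expR (- a + 1 * t) * (phi' t - phi'' t)
     + (phi t - phi' t) * (1 * expR (- a + 1 * t))) :=
  is_deriveM (is_derive_expR_affine _ _ _)
    (is_deriveB (is_derive_phi t) (is_derive_phi' t)).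
pose H t := - (expR (a + -1 * t) * (phi t + phi' t)).
have dH (t : R) : is_derive t 1 H
    (- (expR (a + -1 * t) * (phi' t + phi'' t)
        + (phi t + phi' t) * (-1 * expR (a + -1 * t)))) :=
  is_deriveN (is_deriveM (is_derive_expR_affine _ _ _)
    (is_deriveD (is_derive_phi t) (is_derive_phi' t))).
rewrite (integral_itv_cc_primitive ca cf dG); last first.
  move=> t; rewrite in_itv /= => /andP[_ ta].
  by rewrite /f (normr_sub_lt ta) (_ : - (a - t) = - a + 1 * t); ring.
rewrite (integral_itv_cc_primitive ad cf dH); last first.
  move=> t; rewrite in_itv /= => /andP[at' _].
  by rewrite /f (normr_sub_gt at') (_ : - (t - a) = a + -1 * t); ring.
rewrite -EFinD /G /H phic phi'c phid phi'd.
rewrite (_ : - a + 1 * a = 0); last by ring.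
by rewrite (_ : a + -1 * a = 0) ?expR0; [congr (_%:E); ring | ring].
Qed.

Lemma integral_peakon_u_test n (x m : 'I_n -> R) (B : R) :
  (forall j, `|x j| < B) ->
  phi (- B) = 0 -> phi' (- B) = 0 -> phi B = 0 -> phi' B = 0 ->
  (\int[mu]_(t in `[(- B)%R, B]) (peakon_u x m t * (phi t - phi'' t))%:E
   = (pair_delta x m phi)%:E)%E.
Proof.
move=> xB phiNB phi'NB phiB phi'B.
have int_bump (a : R) : mu.-integrable `[(- B)%R, B]
    (fun t => (expR (- `|t - a|) * (phi t - phi'' t))%:E).
  apply: continuous_compact_integrable; first exact: segment_compact.
  exact: continuous_subspaceT (continuous_expR_dist_test a).
transitivity (\int[mu]_(t in `[(- B)%R, B]) (\sum_(j < n)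
    (m j)%:E * (expR (- `|t - x j|) * (phi t - phi'' t))%:E))%E.
  apply: eq_integral => t _; rewrite /peakon_u mulr_suml -sumEFin.
  by apply: eq_bigr => j _; rewrite -EFinM mulrA.
rewrite integral_sum //; last by move=> j; apply: integrableZl.
rewrite /pair_delta -sumEFin; apply: eq_bigr => j _.
rewrite integralZl //.
have xjB : - B < x j < B by rewrite -ltr_norml.
by rewrite (integral_expR_dist_test xjB) // -EFinM; congr (_%:E); ring.
Qed.

Lemma peakon_u_distribution n (x m : 'I_n -> R) :
  (exists A : R, forall t, A < `|t| -> phi t = 0) ->
  mu.-integrable setT (fun t => (peakon_u x m t * (phi t - derive1n 2 phi t))%:E) /\
  (\int[mu]_t (peakon_u x m t * (phi t - derive1n 2 phi t))%:E
   = (pair_delta x m phi)%:E)%E.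
Proof.
move=> [A phi0].
have phi'0 := derive1_eq0_far phi0.
have phi''0 := derive1_eq0_far phi'0.
pose B := `|A| + \sum_(j < n) `|x j| + 1.
have sum_ge0 : 0 <= \sum_(j < n) `|x j| by apply: sumr_ge0.
have AB : A < B by have := ler_norm A; rewrite /B; lra.
have xB j : `|x j| < B.
  have : `|x j| <= \sum_(i < n) `|x i| by rewrite (bigD1 j) //= lerDl sumr_ge0.
  by have := normr_ge0 A; rewrite /B; lra.
have farB t : B < `|t| -> A < `|t| by lra.
pose F t := peakon_u x m t * (phi t - phi'' t).
have F0 t : B < `|t| -> F t = 0.
  by move=> /farB At; rewrite /F /phi'' /phi' (phi0 _ At) (phi''0 _ At) subrr mulr0.
have cF : continuous F.
  move=> t; apply: cvgM; first exact: continuous_peakon_u.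
  by apply: cvgB; [exact: (is_derive_continuous is_derive_phi t) | exact: c2].
have patchF : (EFin \o F) \_ `[(- B)%R, B] = EFin \o F.
  apply/funext => t; rewrite /patch; case: ifPn => // /negP tB.
  rewrite /= F0 // ltNge; apply/negP => tB'; apply: tB.
  by rewrite inE /= in_itv /= -ler_norml.
have iF : mu.-integrable `[(- B)%R, B] (EFin \o F).
  apply: continuous_compact_integrable; first exact: segment_compact.
  exact: continuous_subspaceT.
split.
  rewrite -[X in _.-integrable _ X]/(EFin \o F) -patchF.
  exact: (proj1 (integrable_mkcond _ _) iF).
have nB : `|B| = B by rewrite gtr0_norm // /B; have := normr_ge0 A; lra.
rewrite -[X in integral _ _ X]/(EFin \o F) -patchF -integral_mkcond.
apply: integral_peakon_u_test => //.
- by rewrite phi0 // normrN; lra.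
- by rewrite /phi' phi'0 // normrN; lra.
- by rewrite phi0 // nB; lra.
- by rewrite /phi' phi'0 // nB; lra.
Qed.

End TestFunction.

Lemma ham_half_pair_delta (R : realType) (n : nat) (x m : 'I_n -> R) :
  ham x m = 2^-1 * pair_delta x m (peakon_u x m).
Proof.
rewrite /pair_delta /peakon_u /ham mulr_sumr; apply: eq_bigr => i _.
rewrite mulrA mulrA mulVf ?pnatr_eq0 // mul1r mulr_sumr.
by apply: eq_bigr => k _; rewrite mulrA.
Qed.

Theorem theorem1 (R : realType) (n : nat) (x m : 'I_n -> R) :
  (0 < n)%N -> injective x ->
  (* h is (partially) differentiable in every phase-space coordinate *)
  (forall k : 'I_n,
      derivable (fun t => ham (upd x k t) m) (x k) 1 /\
      derivable (fun t => ham x (upd m k t)) (m k) 1) /\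
  (* Hamiltonian equations = peakon system *)
  (forall j : 'I_n, pbracket (mcoord j) (@ham R n) x m = 0) /\
  (forall j : 'I_n, pbracket (xcoord j) (@ham R n) x m = xdot_rhs x m j) /\
  (* m = u - u_xx = 2 sum_j m_j delta_{x_j} in the sense of distributions *)
  (forall phi : R -> R,
      (forall xi, derivable phi xi 1) ->
      (forall xi, derivable (derive1 phi) xi 1) ->
      continuous (derive1n 2 phi) ->
      (exists A : R, forall xi, A < `|xi| -> phi xi = 0) ->
      (lebesgue_measure).-integrable setT
         (fun xi => (peakon_u x m xi * (phi xi - derive1n 2 phi xi))%:E) /\
      (\int[lebesgue_measure]_xi
         (peakon_u x m xi * (phi xi - derive1n 2 phi xi))%:E
       = (pair_delta x m phi)%:E)%E) /\
  (* h = 1/2 int u m *)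
  ham x m = 2^-1 * pair_delta x m (peakon_u x m) /\
  (* h = 1/2 ||u||_{H^1}^2 *)
  ((ham x m)%:E =
     (2^-1)%:E * \int[lebesgue_measure]_xi
        ((peakon_u x m xi) ^+ 2 + (derive1 (peakon_u x m) xi) ^+ 2)%:E)%E.
Proof.
move=> _ x_inj.
split.
  move=> k; split; last exact: derivable_ham_m.
  by apply: ex_derive; exact: is_derive_ham_x.
split; first exact: pbracket_mcoord.
split; first exact: pbracket_xcoord.
split; first by move=> phi d1 d2 c2; exact: (peakon_u_distribution d1 d2 c2).
split; first exact: ham_half_pair_delta.
exact: ham_half_H1_norm.
Qed.
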